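(* Let $\mathcal{Q}$ be a quadrangle with vertices $A,C,B,D$ in cyclic order, and let $a,b$ be the tangent lines to $\mathcal{C}_{\mathcal{Q}}$ at $A$ and $B$. For $X\in (A\vee B)\setminus\{A,B\}$ let $x=(X\cdot\rho_{A,B})\vee(a\wedge b)$; then $X\notin x$ and $$\mathcal{C}_{\mathcal{Q}}=\{\,C\cdot\rho_{X,x}\;:\;X\in (A\vee B)\setminus\{A,B\}\,\}\cup\{A,B\}.$$
   Context: $\mathbb{P}^2$ denotes the projective plane over a field $F$ with $\operatorname{char}F\neq 2$. For distinct points $X,Y$, $X\vee Y$ is the line through them; for distinct lines $\ell,m$, $\ell\wedge m$ is their common point. Maps act on the right: $X\cdot\rho$. Four distinct collinear points $A,C,B,D$ form a harmonic set with conjugate pairs $\{A,B\}$ and $\{C,D\}$ if the cross-ratio $(A,B;C,D)=-1$; $D$ is then the harmonic conjugate of $C$ with respect to $A,B$. Four distinct concurrent lines form a harmonic pencil with given conjugate pairs if some (equivalently every) line not through their common point meets them in a harmonic set with the corresponding conjugate pairs. For distinct points $A,B$ on a line $\ell$, $\rho_{A,B}:\ell\to\ell$ fixes $A,B$ and sends every other point of $\ell$ to its harmonic conjugate with respect to $A,B$. For a point $P$ and a line $m$ with $P\notin m$, the harmonic reflection $\rho_{P,m}$ of $\mathbb{P}^2$ fixes $P$ and every point of $m$ and sends every other point $X$ to the harmonic conjugate of $X$ with respect to $P$ and $(X\vee P)\wedge m$. A quadrangle $\mathcal{Q}$ with vertices $A,C,B,D$ (in cyclic order) consists of four points in general position (no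 three collinear) together with this cyclic order up to reversal; its sides are $A\vee C, C\vee B, B\vee D, D\vee A$, and its diagonal lines are $A\vee B$ and $C\vee D$. The harmonic curve $\mathcal{C}_{\mathcal{Q}}$ is the set consisting of $A,C,B,D$ together with all points $Z\notin\{A,B,C,D\}$ such that $Z\vee A, Z\vee C, Z\vee B, Z\vee D$ are four distinct lines forming a harmonic pencil with conjugate pairs $\{Z\vee A,Z\vee B\}$ and $\{Z\vee C,Z\vee D\}$. The tangent line at a vertex $V$ of $\mathcal{Q}$ is the harmonic conjugate, within the pencil of lines through $V$, of the diagonal line through $V$ with respect to the two sides through $V$. *)

(* Projective plane P^2(F) in homogeneous coordinates:
   points and lines are nonzero row vectors of F^3, taken up to a nonzero
   scalar (relation [peq]); a point p is on a line l iff p . l = 0. *)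
From HB Require Import structures.
From mathcomp Require Import all_boot all_order all_algebra.
Set Implicit Arguments. Unset Strict Implicit. Unset Printing Implicit Defensive.
Import Order.TTheory GRing.Theory Num.Theory.
Local Open Scope ring_scope.

Section Proj.
Variable F : fieldType.
Notation vec := 'rV[F]_3.

Definition peq (u v : vec) : Prop := u != 0 /\ exists k : F, k != 0 /\ v = k *: u.

Definition dot (u v : vec) : F := \sum_(i < 3) u 0 i * v 0 i.

Definition incident (p l : vec) : Prop := dot p l = 0.

Definition cross (u v : vec) : vec :=
  \row_(k < 3) (u 0 (inord ((k + 1) %% 3)) * v 0 (inord ((k + 2) %% 3))
               - u 0 (inord ((k + 2) %% 3)) * v 0 (inord ((k + 1) %% 3))).
Definition join (X Y : vec) : vec := cross X Y.
Definition meet (l m : vec) : vec := cross l m.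

(* r is the cross-ratio (A,B;C,D) of four collinear points, A <> B:
   writing C = c1 A + c2 B, D = d1 A + d2 B, (A,B;C,D) = (c2 d1)/(c1 d2)
   (= [A,C][B,D]/([A,D][B,C]) in terms of 2x2 brackets). *)
Definition is_cross_ratio (A B C D : vec) (r : F) : Prop :=
  exists c1 c2 d1 d2 : F,
    C = c1 *: A + c2 *: B /\ D = d1 *: A + d2 *: B /\
    c1 * d2 != 0 /\ r = (c2 * d1) / (c1 * d2).

Definition distinct4 (P Q R S : vec) : Prop :=
  [/\ P != 0, Q != 0, R != 0 & S != 0] /\
  [/\ ~ peq P Q, ~ peq P R & ~ peq P S] /\
  [/\ ~ peq Q R, ~ peq Q S & ~ peq R S].

(* A,C,B,D form a harmonic set with conjugate pairs {A,B}, {C,D} *)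
Definition harmonic (A B C D : vec) : Prop :=
  distinct4 A B C D /\ incident C (join A B) /\ incident D (join A B) /\
  is_cross_ratio A B C D (-1).

Definition harmonic_pencil (l1 l2 l3 l4 : vec) : Prop :=
  distinct4 l1 l2 l3 l4 /\
  exists O : vec, O != 0 /\ incident O l1 /\ incident O l2 /\
    incident O l3 /\ incident O l4 /\
    exists m : vec, m != 0 /\ ~ incident O m /\
      harmonic (meet m l1) (meet m l2) (meet m l3) (meet m l4).

Definition quadrangle (A C B D : vec) : Prop :=
  distinct4 A C B D /\
  ~ incident B (join A C) /\ ~ incident D (join A C) /\
  ~ incident D (join A B) /\ ~ incident D (join C B).

Definition on_harmonic_curve (A C B D Z : vec) : Prop :=
  Z != 0 /\
  (peq Z A \/ peq Z C \/ peq Z B \/ peq Z D \/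
   ((~ peq Z A /\ ~ peq Z C /\ ~ peq Z B /\ ~ peq Z D) /\
    harmonic_pencil (join Z A) (join Z B) (join Z C) (join Z D))).

(* t is the tangent line at the vertex V of the quadrangle, where s1, s2 are
   the sides through V and d the diagonal line through V: t is the harmonic
   conjugate of d w.r.t. s1, s2 in the pencil through V *)
Definition tangent_line (s1 s2 d t : vec) : Prop := harmonic_pencil s1 s2 d t.

(* Y = X . rho_{P,m}, the harmonic reflection with centre P and axis m
   (P not on m) *)
Definition harm_refl (P m X Y : vec) : Prop :=
  P != 0 /\ m != 0 /\ ~ incident P m /\ X != 0 /\
  (peq X P -> peq Y P) /\
  (incident X m -> peq X Y) /\
  (~ peq X P -> ~ incident X m -> harmonic P (meet (join X P) m) X Y).

End Proj.

From HB Require Import structures.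
From mathcomp Require Import all_boot all_order all_algebra.
From mathcomp Require Import ring.
Set Implicit Arguments. Unset Strict Implicit. Unset Printing Implicit Defensive.
Import Order.TTheory GRing.Theory Num.Theory.
Local Open Scope ring_scope.

(* Since the quadrangle is nondegenerate, A, B, C is a projective frame in which
   D = (al : be : ga) with al be ga <> 0.  There the harmonic condition at a point
   Z = (x : y : z) other than the vertices becomes the conic
   2 ga x y - al y z - be x z = 0 through A, B, C, D.  Its tangents at A and B meet in
   the pole P = (al : be : 2 ga) of A \/ B, and for X = (c : d : 0) we have
   X . rho_{A,B} = (c : -d : 0), so C . rho_{X,x} with x = (c : -d : 0) \/ P is the point
   ((c be + d al) / (2 ga d) : (c be + d al) / (2 ga c) : 1) of the conic; every point of
   the conic other than A and B arises in this way.  The frame change is linear and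
   preserves all the incidence and harmonic notions, which are handled through explicit
   parametrisations. *)

Section Coordinates.
Variable F : fieldType.
Notation vec := 'rV[F]_3.
Implicit Types (x y z k : F) (u v w : vec).

Definition i0 : 'I_3 := @Ordinal 3 0 isT.
Definition i1 : 'I_3 := @Ordinal 3 1 isT.
Definition i2 : 'I_3 := @Ordinal 3 2 isT.

Definition vec3 x y z : vec := \row_(i < 3) nth 0 [:: x; y; z] i.

Definition e1 : vec := vec3 1 0 0.
Definition e2 : vec := vec3 0 1 0.
Definition e3 : vec := vec3 0 0 1.

Lemma vec3_i0 x y z : vec3 x y z 0 i0 = x. Proof. by rewrite mxE. Qed.
Lemma vec3_i1 x y z : vec3 x y z 0 i1 = y. Proof. by rewrite mxE. Qed.
Lemma vec3_i2 x y z : vec3 x y z 0 i2 = z. Proof. by rewrite mxE. Qed.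

Lemma ord3P (P : 'I_3 -> Prop) : P i0 -> P i1 -> P i2 -> forall i, P i.
Proof.
move=> h0 h1 h2 [[|[|[|k]]] hk] //.
- by rewrite (_ : Ordinal hk = i0) //; apply: val_inj.
- by rewrite (_ : Ordinal hk = i1) //; apply: val_inj.
- by rewrite (_ : Ordinal hk = i2) //; apply: val_inj.
Qed.

Lemma vec3_ex u : exists x y z, u = vec3 x y z.
Proof.
by exists (u 0 i0), (u 0 i1), (u 0 i2); apply/rowP; apply: ord3P; rewrite mxE.
Qed.

Lemma vec3_inj x y z x' y' z' :
  vec3 x y z = vec3 x' y' z' <-> [/\ x = x', y = y' & z = z'].
Proof.
split=> [e|[-> -> ->] //].
by split; [move/(congr1 (fun v => v 0 i0)): e | move/(congr1 (fun v => v 0 i1)): e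
          | move/(congr1 (fun v => v 0 i2)): e]; rewrite !mxE.
Qed.

Lemma vec3_0 : 0 = vec3 0 0 0.
Proof. by apply/rowP; apply: ord3P; rewrite !mxE. Qed.

Lemma add_vec3 x y z x' y' z' :
  vec3 x y z + vec3 x' y' z' = vec3 (x + x') (y + y') (z + z').
Proof. by apply/rowP; apply: ord3P; rewrite !mxE. Qed.

Lemma scale_vec3 k x y z : k *: vec3 x y z = vec3 (k * x) (k * y) (k * z).
Proof. by apply/rowP; apply: ord3P; rewrite !mxE. Qed.

Lemma opp_vec3 x y z : - vec3 x y z = vec3 (- x) (- y) (- z).
Proof. by apply/rowP; apply: ord3P; rewrite !mxE. Qed.

Lemma dot_vec3 x y z x' y' z' :
  dot (vec3 x y z) (vec3 x' y' z') = x * x' + y * y' + z * z'.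
Proof.
rewrite /dot !big_ord_recr big_ord0 /= add0r.
have -> : (ord_max : 'I_3) = i2 by apply: val_inj.
have -> : (widen_ord (leqnSn 2) ord_max : 'I_3) = i1 by apply: val_inj.
have -> : (widen_ord (leqnSn 2) (widen_ord (leqnSn 1) ord_max) : 'I_3) = i0.
  by apply: val_inj.
by rewrite !mxE.
Qed.

Lemma cross_vec3 x y z x' y' z' : cross (vec3 x y z) (vec3 x' y' z') =
  vec3 (y * z' - z * y') (z * x' - x * z') (x * y' - y * x').
Proof.
have e0 : inord 0 = i0 by apply: val_inj; rewrite /= inordK.
have e1 : inord 1 = i1 by apply: val_inj; rewrite /= inordK.
have e2 : inord 2 = i2 by apply: val_inj; rewrite /= inordK.
by apply/rowP; apply: ord3P; rewrite mxE /= ?e0 ?e1 ?e2 !mxE.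
Qed.

Lemma vec3_neq0E x y z : (vec3 x y z != 0) = [|| x != 0, y != 0 | z != 0].
Proof.
apply/idP/idP=> [|h].
  apply: contraTT; rewrite !negb_or !negbK => /and3P [/eqP-> /eqP-> /eqP->].
  by rewrite -vec3_0 eqxx.
by apply/eqP; rewrite vec3_0 => /vec3_inj [ex ey ez]; move: h; rewrite ex ey ez !eqxx.
Qed.

Lemma e1_neq0 : e1 != 0. Proof. by rewrite /e1 vec3_neq0E oner_neq0. Qed.
Lemma e2_neq0 : e2 != 0. Proof. by rewrite /e2 vec3_neq0E oner_neq0 orbT. Qed.
Lemma e3_neq0 : e3 != 0. Proof. by rewrite /e3 vec3_neq0E oner_neq0 !orbT. Qed.

(* [field] normalises [2 * 2] to [4] in its side conditions. *)
Lemma natr4_neq0 : (2%:R : F) != 0 -> (4%:R : F) != 0.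
Proof. by move=> h; rewrite (_ : 4 = 2 * 2)%N // natrM mulf_neq0. Qed.

Lemma diff_eq0 x y : x = y -> x - y = 0.
Proof. by move=> ->; rewrite subrr. Qed.

End Coordinates.

Arguments e1 {F}.
Arguments e2 {F}.
Arguments e3 {F}.
Arguments e1_neq0 {F}.
Arguments e2_neq0 {F}.
Arguments e3_neq0 {F}.

Ltac coords u :=
  let x := fresh "x" in let y := fresh "y" in let z := fresh "z" in
  case: (vec3_ex u) => [x [y [z ->]]].
Ltac vsimp := repeat progress rewrite ?vec3_i0 ?vec3_i1 ?vec3_i2 ?vec3_0 ?scale_vec3
  ?add_vec3 ?opp_vec3 ?cross_vec3 ?dot_vec3 /=.
Ltac veq := vsimp; apply/vec3_inj; split; ring.
Ltac nonzero := repeat (apply/andP; split);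
  repeat (rewrite ?oppr_eq0 ?invr_eq0; apply: mulf_neq0); rewrite ?oppr_eq0 ?invr_eq0;
  try apply: natr4_neq0; done.
Ltac veq_f := vsimp; apply/vec3_inj; split; field; nonzero.
(* [lincombN q1 E1 ... qN EN] proves [x = y] from [x - y = q1 (l1 - r1) + ...],
   where [Ei : li = ri]. *)
Ltac lincomb1 q E := match type of E with ?l = ?r =>
  apply: subr0_eq; transitivity (q * (l - r));
  [field; nonzero | by rewrite (diff_eq0 E) mulr0] end.
Ltac lincomb2 q1 E1 q2 E2 :=
  match type of E1 with ?l1 = ?r1 => match type of E2 with ?l2 = ?r2 =>
  apply: subr0_eq; transitivity (q1 * (l1 - r1) + q2 * (l2 - r2));
  [field; nonzero | by rewrite (diff_eq0 E1) (diff_eq0 E2) !mulr0 addr0] end end.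
Ltac lincomb4 q1 E1 q2 E2 q3 E3 q4 E4 :=
  match type of E1 with ?l1 = ?r1 => match type of E2 with ?l2 = ?r2 =>
  match type of E3 with ?l3 = ?r3 => match type of E4 with ?l4 = ?r4 =>
  apply: subr0_eq;
  transitivity (q1 * (l1 - r1) + q2 * (l2 - r2) + q3 * (l3 - r3) + q4 * (l4 - r4));
  [field; nonzero | by rewrite (diff_eq0 E1) (diff_eq0 E2) (diff_eq0 E3) (diff_eq0 E4)
                      !mulr0 !addr0] end end end end.

Section VectorAlgebra.
Variable F : fieldType.
Notation vec := 'rV[F]_3.
Implicit Types (k t : F) (u v w : vec).

Lemma crossC u v : cross v u = - cross u v.
Proof. by coords u; coords v; veq. Qed.
Lemma crossvv u : cross u u = 0.
Proof. by coords u; veq. Qed.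
Lemma cross0v u : cross 0 u = 0.
Proof. by coords u; veq. Qed.
Lemma crossv0 u : cross u 0 = 0.
Proof. by coords u; veq. Qed.
Lemma crossZl k u v : cross (k *: u) v = k *: cross u v.
Proof. by coords u; coords v; veq. Qed.
Lemma crossZr k u v : cross u (k *: v) = k *: cross u v.
Proof. by coords u; coords v; veq. Qed.
Lemma crossDr u v w : cross u (v + w) = cross u v + cross u w.
Proof. by coords u; coords v; coords w; veq. Qed.
Lemma crossBr u v w : cross u (v - w) = cross u v - cross u w.
Proof. by coords u; coords v; coords w; veq. Qed.

Lemma dotC u v : dot u v = dot v u.
Proof. by coords u; coords v; vsimp; ring. Qed.
Lemma dot0v u : dot 0 u = 0.
Proof. by coords u; vsimp; ring. Qed.
Lemma dotv0 u : dot u 0 = 0.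
Proof. by coords u; vsimp; ring. Qed.
Lemma dotZl k u v : dot (k *: u) v = k * dot u v.
Proof. by coords u; coords v; vsimp; ring. Qed.
Lemma dotZr k u v : dot u (k *: v) = k * dot u v.
Proof. by coords u; coords v; vsimp; ring. Qed.
Lemma dotDl u v w : dot (u + v) w = dot u w + dot v w.
Proof. by coords u; coords v; coords w; vsimp; ring. Qed.
Lemma dotDr u v w : dot u (v + w) = dot u v + dot u w.
Proof. by coords u; coords v; coords w; vsimp; ring. Qed.
Lemma dotNr u v : dot u (- v) = - dot u v.
Proof. by coords u; coords v; vsimp; ring. Qed.
Lemma dotBl u v w : dot (u - v) w = dot u w - dot v w.
Proof. by coords u; coords v; coords w; vsimp; ring. Qed.
Lemma dotBr u v w : dot u (v - w) = dot u v - dot u w.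
Proof. by coords u; coords v; coords w; vsimp; ring. Qed.

Lemma dot_crossl u v : dot u (cross u v) = 0.
Proof. by coords u; coords v; vsimp; ring. Qed.
Lemma dot_crossr u v : dot v (cross u v) = 0.
Proof. by coords u; coords v; vsimp; ring. Qed.
Lemma dot_cross_rot u v w : dot u (cross v w) = dot v (cross w u).
Proof. by coords u; coords v; coords w; vsimp; ring. Qed.
Lemma cross_crossl u v w : cross (cross u v) w = dot u w *: v - dot v w *: u.
Proof. by coords u; coords v; coords w; veq. Qed.

Lemma dot_neq0 u : u != 0 -> exists m, m != 0 /\ dot u m != 0.
Proof.
coords u; rewrite vec3_neq0E => /or3P [] h;
  [exists (vec3 1 0 0) | exists (vec3 0 1 0) | exists (vec3 0 0 1)];
  by rewrite vec3_neq0E dot_vec3 !mulr0 !mulr1 ?addr0 ?add0r oner_neq0 ?orbT.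
Qed.

Lemma cross_eq0_parallel u v : u != 0 -> cross u v = 0 -> exists t, v = t *: u.
Proof.
move=> /dot_neq0 [m [_ hum]] huv; exists (dot v m / dot u m).
have := cross_crossl u v m; rewrite huv cross0v => /esym/eqP.
rewrite subr_eq0 => /eqP /(congr1 (fun w => (dot u m)^-1 *: w)).
by rewrite !scalerA mulVf // scale1r mulrC.
Qed.

Lemma peq_cross u v : peq u v -> cross u v = 0.
Proof. by case=> _ [k [_ ->]]; rewrite crossZr crossvv scaler0. Qed.

Lemma peq_crossP u v : u != 0 -> v != 0 -> peq u v <-> cross u v = 0.
Proof.
move=> hu hv; split=> [|/(cross_eq0_parallel hu) [t ht]]; first exact: peq_cross.
split=> //; exists t; split=> //.
by apply: contraNneq hv => t0; rewrite ht t0 scale0r.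
Qed.

Lemma cross_neq0_npeq u v : cross u v != 0 -> ~ peq u v.
Proof. by move=> h /peq_cross; apply/eqP. Qed.

Lemma npeq_cross_neq0 u v : u != 0 -> v != 0 -> ~ peq u v -> cross u v != 0.
Proof. by move=> hu hv np; apply/eqP => /(peq_crossP hu hv). Qed.

Lemma peq_scale u k : u != 0 -> k != 0 -> peq u (k *: u).
Proof. by move=> hu hk; split=> //; exists k. Qed.

Lemma peq_refl u : u != 0 -> peq u u.
Proof. by move=> hu; rewrite -[X in peq _ X]scale1r; apply: peq_scale; rewrite ?oner_neq0. Qed.

Lemma peq_sym u v : peq u v -> peq v u.
Proof.
case=> hu [k [hk ->]]; split; first by rewrite scaler_eq0 negb_or hk.
by exists k^-1; rewrite invr_eq0 hk scalerA mulVf // scale1r.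
Qed.

Lemma peq_trans u v w : peq u v -> peq v w -> peq u w.
Proof.
case=> hu [k [hk ->]] [_ [l [hl ->]]]; split=> //; exists (l * k).
by rewrite mulf_neq0 // scalerA.
Qed.

Lemma cross_e1e2 : cross e1 e2 = e3 :> vec.
Proof. by rewrite /e1 /e2 /e3; veq. Qed.

Lemma npeq_e1 (x y z : F) : (y != 0) || (z != 0) -> ~ peq (vec3 x y z) e1.
Proof.
move=> h /peq_cross; rewrite /e1 cross_vec3 vec3_0 => /vec3_inj [_ ez ey].
have y0 : y = 0 by lincomb1 (-1 : F) ey.
have z0 : z = 0 by lincomb1 (1 : F) ez.
by move: h; rewrite y0 z0 eqxx.
Qed.

Lemma npeq_e2 (x y z : F) : (x != 0) || (z != 0) -> ~ peq (vec3 x y z) e2.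
Proof.
move=> h /peq_cross; rewrite /e2 cross_vec3 vec3_0 => /vec3_inj [ez _ ex].
have x0 : x = 0 by lincomb1 (1 : F) ex.
have z0 : z = 0 by lincomb1 (-1 : F) ez.
by move: h; rewrite x0 z0 eqxx.
Qed.

End VectorAlgebra.

Section Harmonic.
Variable F : fieldType.
Hypothesis two_neq0 : (2%:R : F) != 0.
Notation vec := 'rV[F]_3.
Implicit Types (k : F) (u v P Q R S X Y m : vec).

Lemma scale_neq0 k u : k != 0 -> u != 0 -> k *: u != 0.
Proof. by move=> hk hu; rewrite scaler_eq0 negb_or hk hu. Qed.

Definition harm_param P Q R S : Prop :=
  cross P Q != 0 /\ exists c1 c2 k : F,
    [/\ c1 != 0, c2 != 0, k != 0, R = c1 *: P + c2 *: Q & S = k *: (c1 *: P - c2 *: Q)].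

Lemma harm_param_distinct4 P Q R S : harm_param P Q R S -> distinct4 P Q R S.
Proof.
move=> [hPQ [c1 [c2 [k [h1 h2 hk -> ->]]]]].
have nz_multiple t w : t != 0 -> w = t *: cross P Q -> w != 0.
  by move=> ht ->; rewrite scale_neq0.
have nPR : cross P (c1 *: P + c2 *: Q) != 0.
  by apply: (nz_multiple c2) => //; coords P; coords Q; veq.
have nPS : cross P (k *: (c1 *: P - c2 *: Q)) != 0.
  by apply: (nz_multiple (- (k * c2))); rewrite ?oppr_eq0 ?mulf_neq0 //; coords P; coords Q; veq.
have nQR : cross Q (c1 *: P + c2 *: Q) != 0.
  by apply: (nz_multiple (- c1)); rewrite ?oppr_eq0 //; coords P; coords Q; veq.
have nQS : cross Q (k *: (c1 *: P - c2 *: Q)) != 0.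
  by apply: (nz_multiple (- (k * c1))); rewrite ?oppr_eq0 ?mulf_neq0 //; coords P; coords Q; veq.
have nRS : cross (c1 *: P + c2 *: Q) (k *: (c1 *: P - c2 *: Q)) != 0.
  apply: (nz_multiple (- (2%:R * k * c1 * c2))); rewrite ?oppr_eq0 ?mulf_neq0 //.
  by coords P; coords Q; veq.
have nz_l u v : cross u v != 0 -> u != 0 by apply: contraNneq => ->; rewrite cross0v.
have nz_r u v : cross u v != 0 -> v != 0 by apply: contraNneq => ->; rewrite crossv0.
split; first by split; [exact: nz_l hPQ | exact: nz_r hPQ | exact: nz_r nPR | exact: nz_r nPS].
by split; split; exact: cross_neq0_npeq.
Qed.

Lemma harmonic_harm_param P Q R S : harmonic P Q R S -> harm_param P Q R S.
Proof.
case=> [[[hP hQ _ _] [[nPQ _ _] _]] [_ [_ [c1 [c2 [d1 [d2 [-> [-> [hcd er]]]]]]]]]].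
have e : c2 * d1 = - (c1 * d2) by rewrite -mulN1r er divfK.
have [c1nz d2nz] : c1 != 0 /\ d2 != 0 by apply/andP; rewrite -negb_or -mulf_eq0.
have [c2nz d1nz] : c2 != 0 /\ d1 != 0.
  by apply/andP; rewrite -negb_or -mulf_eq0 e oppr_eq0.
split; first exact: npeq_cross_neq0.
exists c1, c2, (d1 / c1); split; rewrite ?mulf_neq0 ?invr_eq0 //.
rewrite scalerBr !scalerA -scaleNr; congr (_ *: _ + _ *: _); first by field.
have -> : d2 = - (c2 * d1) / c1 by rewrite e opprK; field.
by field.
Qed.

Lemma harm_param_harmonic P Q R S : harm_param P Q R S -> harmonic P Q R S.
Proof.
move=> hf; have hd := harm_param_distinct4 hf.
case: hf => hPQ [c1 [c2 [k [h1 h2 hk eR eS]]]].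
split=> //; split; last split.
- by rewrite /incident /join eR; coords P; coords Q; vsimp; ring.
- by rewrite /incident /join eS; coords P; coords Q; vsimp; ring.
exists c1, c2, (k * c1), (- (k * c2)); split=> //; split.
  by rewrite eS scalerBr !scalerA scaleNr.
split; first by rewrite mulf_neq0 // oppr_eq0 mulf_neq0.
by field; rewrite oppr_eq0 !mulf_neq0.
Qed.

Lemma harmonicP P Q R S : harmonic P Q R S <-> harm_param P Q R S.
Proof. by split; [apply: harmonic_harm_param | apply: harm_param_harmonic]. Qed.

Lemma eq_meet_through O m l l' : ~ incident O m ->
  incident O l -> incident O l' -> meet m l = meet m l' -> l = l'.
Proof.
rewrite /incident => hOm hl hl' e; apply/eqP; rewrite -subr_eq0; apply/eqP.
have m_neq0 : m != 0 by apply: contra_not_neq hOm => ->; rewrite dotv0.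
have /(cross_eq0_parallel m_neq0) [t ht] : cross m (l - l') = 0.
  by rewrite crossBr /meet in e *; rewrite e subrr.
have : dot O (l - l') = 0 by rewrite dotBr hl hl' subrr.
rewrite ht dotZr => /eqP; rewrite mulf_eq0 => /orP [/eqP->|/eqP //]; exact: scale0r.
Qed.

Lemma harmonic_pencil_harm_param l1 l2 l3 l4 :
  harmonic_pencil l1 l2 l3 l4 -> harm_param l1 l2 l3 l4.
Proof.
case=> [[[h1 h2 _ _] [[n12 _ _] _]] [O [_ [i1 [i2 [i3 [i4 [m [_ [nOm]]]]]]]]]].
move/harmonicP => [_ [c1 [c2 [k [hc1 hc2 hk e3 e4]]]]].
split; first exact: npeq_cross_neq0.
have incD c c' : incident O (c *: l1 + c' *: l2).
  by rewrite /incident dotDr !dotZr i1 i2 !mulr0 addr0.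
exists c1, c2, k; split=> //.
- by apply: (eq_meet_through nOm) => //; rewrite /meet crossDr !crossZr.
- apply: (eq_meet_through nOm) => //.
    by rewrite scalerBr !scalerA -scaleNr; apply: incD.
  by rewrite /meet crossZr crossBr !crossZr.
Qed.

Lemma harm_param_harmonic_pencil l1 l2 l3 l4 :
  harm_param l1 l2 l3 l4 -> harmonic_pencil l1 l2 l3 l4.
Proof.
move=> hf; split; first exact: harm_param_distinct4.
case: hf => h12 [c1 [c2 [k [hc1 hc2 hk e3 e4]]]].
exists (cross l1 l2); split=> //.
have [m [hm hOm]] := dot_neq0 h12.
split; first by rewrite /incident dotC dot_crossl.
split; first by rewrite /incident dotC dot_crossr.
split; first by rewrite /incident e3; coords l1; coords l2; vsimp; ring.
split; first by rewrite /incident e4; coords l1; coords l2; vsimp; ring.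
exists m; split=> //; split; first exact/eqP.
apply/harmonicP; split.
  have -> : cross (meet m l1) (meet m l2) = dot m (cross l1 l2) *: m.
    by rewrite /meet; coords m; coords l1; coords l2; veq.
  by rewrite scale_neq0 // dotC.
exists c1, c2, k; split=> //; rewrite /meet ?e3 ?e4.
  by coords m; coords l1; coords l2; veq.
by coords m; coords l1; coords l2; veq.
Qed.

Lemma harmonic_pencilP l1 l2 l3 l4 :
  harmonic_pencil l1 l2 l3 l4 <-> harm_param l1 l2 l3 l4.
Proof.
by split; [apply: harmonic_pencil_harm_param | apply: harm_param_harmonic_pencil].
Qed.

Definition refl_image P m X : vec := X - (2%:R * dot X m / dot P m) *: P.

Definition refl_param P m X Y : Prop :=
  [/\ P != 0, m != 0, dot P m != 0, X != 0 & peq Y (refl_image P m X)].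

Lemma refl_image_center P m t : dot P m != 0 -> refl_image P m (t *: P) = (- t) *: P.
Proof.
move=> hPm; rewrite /refl_image dotZl -scalerBl; congr (_ *: _); field; exact: hPm.
Qed.

Lemma refl_image_axis P m X : dot X m = 0 -> refl_image P m X = X.
Proof. by rewrite /refl_image => ->; rewrite mulr0 mul0r scale0r subr0. Qed.

Lemma refl_image_neq0 P m X : cross X P != 0 -> refl_image P m X != 0.
Proof.
apply: contraNneq; rewrite /refl_image => /eqP; rewrite subr_eq0 => /eqP ->.
by rewrite crossZl crossvv scaler0.
Qed.

Section ReflectionCoefficients.
Variables (P m X : vec).
Hypothesis Pm_neq0 : dot P m != 0.
Let M := dot X m *: P - dot P m *: X.

Lemma refl_coeffs_point : X = dot X m / dot P m *: P + (- (dot P m)^-1) *: M.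
Proof.
by rewrite /M; move: (dot X m) (dot P m) Pm_neq0 => xm pm ?; coords P; coords X; veq_f.
Qed.

Lemma refl_coeffs_image :
  refl_image P m X = - (dot X m / dot P m *: P - (- (dot P m)^-1) *: M).
Proof.
by rewrite /M /refl_image; move: (dot X m) (dot P m) Pm_neq0 => xm pm ?;
  coords P; coords X; veq_f.
Qed.

Lemma refl_coeffs_unique c1 c2 : cross X P != 0 ->
  X = c1 *: P + c2 *: M -> c1 = dot X m / dot P m /\ c2 = - (dot P m)^-1.
Proof.
move=> hXP eX; have c2E : c2 = - (dot P m)^-1.
  have : (1 + c2 * dot P m) *: cross X P = 0.
    rewrite scalerDl scale1r {1}eX /M.
    by move: (dot X m) (dot P m) => xm pm; coords P; coords X; veq.
  move/eqP; rewrite scaler_eq0 (negbTE hXP) orbF addrC addr_eq0 => /eqP h.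
  by apply: (mulIf Pm_neq0); rewrite h mulNr mulVf.
split=> //; have /= := congr1 (fun w => dot w m) eX; rewrite /M dotDl !dotZl dotBl !dotZl c2E => ->.
by field.
Qed.

End ReflectionCoefficients.

Lemma harmonic_refl_image P m X Y : dot P m != 0 -> cross X P != 0 -> dot X m != 0 ->
  harmonic P (meet (join X P) m) X Y <-> peq Y (refl_image P m X).
Proof.
move=> hPm hXP hXm; rewrite harmonicP /meet /join cross_crossl.
have hR := refl_image_neq0 m hXP.
split.
- case=> _ [c1 [c2 [k [_ _ hk /(refl_coeffs_unique hPm hXP) [-> ->] ->]]]].
  move: hR; rewrite refl_coeffs_image // oppr_eq0 => hW.
  rewrite -[Z in peq _ Z]scaleN1r; apply: (peq_trans (peq_sym (peq_scale hW hk))).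
  by apply: peq_scale; rewrite ?oppr_eq0 ?oner_neq0.
- move=> [_ [s [hs eT]]]; split.
    rewrite crossBr !crossZr crossvv scaler0 sub0r -scaleNr scale_neq0 ?oppr_eq0 //.
    by rewrite crossC oppr_eq0.
  exists (dot X m / dot P m), (- (dot P m)^-1), (- s^-1); split; try by nonzero.
    exact: refl_coeffs_point.
  by rewrite scaleNr -scalerN -refl_coeffs_image // eT scalerA mulVf ?scale1r.
Qed.

Lemma harm_reflP P m X Y : harm_refl P m X Y <-> refl_param P m X Y.
Proof.
have center_case t : P != 0 -> dot P m != 0 -> X = t *: P -> X != 0 ->
    peq Y (refl_image P m X) <-> peq Y P.
  move=> hP hPm -> hX; have ht : - t != 0.
    by rewrite oppr_eq0; apply: contraNneq hX => ->; rewrite scale0r.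
  rewrite refl_image_center //; split=> h; first exact: peq_trans h (peq_sym (peq_scale hP ht)).
  exact: peq_trans h (peq_scale hP ht).
split.
- case=> hP [hm [nPm [hX [hcenter [haxis hgen]]]]].
  have hPm : dot P m != 0 by apply/eqP.
  split=> //; have [eXP|nXP] := eqVneq (cross X P) 0.
    have /(cross_eq0_parallel hP) [t ht] : cross P X = 0 by rewrite crossC eXP oppr0.
    by apply/(center_case _ hP hPm ht hX)/hcenter/peq_crossP.
  have [eXm|nXm] := eqVneq (dot X m) 0.
    by rewrite refl_image_axis //; apply/peq_sym/haxis.
  by apply/harmonic_refl_image/hgen => //; [apply: cross_neq0_npeq | apply/eqP].
- case=> hP hm hPm hX hY; split=> //; split=> //; split; first exact/eqP.
  split=> //; split.
    move=> pXP; have /(cross_eq0_parallel hP) [t ht] : cross P X = 0.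
      by rewrite crossC (peq_cross pXP) oppr0.
    exact/(center_case _ hP hPm ht hX).
  split; first by move=> hXm; apply/peq_sym; rewrite -(refl_image_axis P hXm).
  move=> nXP nXm; apply/harmonic_refl_image => //; last exact/eqP.
  exact: npeq_cross_neq0.
Qed.

End Harmonic.

Section AlgebraicForms.
Variable F : fieldType.
Hypothesis two_neq0 : (2%:R : F) != 0.
Notation vec := 'rV[F]_3.
Implicit Types (A B C D P Z a b : vec).

Definition on_curve_alg A C B D Z : Prop :=
  peq Z A \/ peq Z C \/ peq Z B \/ peq Z D \/
  ((~ peq Z A /\ ~ peq Z C /\ ~ peq Z B /\ ~ peq Z D) /\
   harm_param (cross Z A) (cross Z B) (cross Z C) (cross Z D)).

Definition in_refl_orbit A B C P Z : Prop :=
  peq Z A \/ peq Z B \/ exists X Y R : vec,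
  [/\ X != 0, incident X (cross A B), ~ peq X A & ~ peq X B] /\
  [/\ harm_param A B X Y, refl_param X (cross Y P) C R & peq R Z].

Lemma on_harmonic_curveP A C B D Z :
  on_harmonic_curve A C B D Z <-> Z != 0 /\ on_curve_alg A C B D Z.
Proof.
rewrite /on_harmonic_curve /on_curve_alg /join.
split; case=> hZ [h|[h|[h|[h|[hn hp]]]]]; split=> //; do ?[by left | right];
  by split=> //; apply/harmonic_pencilP.
Qed.

Lemma in_refl_orbitP A B C a b Z :
  (peq Z A \/ peq Z B \/ exists X Y R : vec,
     [/\ X != 0, incident X (join A B), ~ peq X A & ~ peq X B] /\
     [/\ harmonic A B X Y, harm_refl X (join Y (meet a b)) C R & peq R Z])
  <-> in_refl_orbit A B C (cross a b) Z.
Proof.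
rewrite /in_refl_orbit /join /meet.
split; case=> [h|[h|[X [Y [R [hX [hXY hR hRZ]]]]]]]; do ?[by left | by right; left];
  by right; right; exists X, Y, R; split=> //; split=> //; [apply/harmonicP | apply/harm_reflP].
Qed.

End AlgebraicForms.

Section InjectiveLinearMap.
Variable F : fieldType.
Notation vec := 'rV[F]_3.
Implicit Types (u v P Q R S : vec).
Variable f : vec -> vec.
Hypothesis f_lin : forall (a b : F) u v, f (a *: u + b *: v) = a *: f u + b *: f v.
Hypothesis f_eq0 : forall u, f u = 0 -> u = 0.

Lemma lin_f0 : f 0 = 0.
Proof. by have := f_lin 0 0 0 0; rewrite !scale0r addr0. Qed.
Lemma lin_fZ a u : f (a *: u) = a *: f u.
Proof. by have := f_lin a 0 u 0; rewrite !scale0r !addr0. Qed.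
Lemma lin_fD u v : f (u + v) = f u + f v.
Proof. by have := f_lin 1 1 u v; rewrite !scale1r. Qed.
Lemma lin_fB u v : f (u - v) = f u - f v.
Proof. by have := f_lin 1 (-1) u v; rewrite !scale1r !scaleN1r. Qed.

Lemma lin_inj : injective f.
Proof.
move=> u v e; apply/eqP; rewrite -subr_eq0; apply/eqP/f_eq0.
by rewrite lin_fB e subrr.
Qed.

Lemma lin_neq0 u : (f u != 0) = (u != 0).
Proof. by rewrite -{1}lin_f0 (inj_eq lin_inj). Qed.

Lemma peq_lin u v : peq (f u) (f v) <-> peq u v.
Proof.
rewrite /peq lin_neq0; split; case=> hu [k [hk e]]; split=> //; exists k; split=> //.
- by apply: lin_inj; rewrite lin_fZ.
- by rewrite e lin_fZ.
Qed.

Hypothesis f_cross : forall u v, (cross (f u) (f v) != 0) = (cross u v != 0).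

Lemma harm_param_lin P Q R S : harm_param (f P) (f Q) (f R) (f S) <-> harm_param P Q R S.
Proof.
rewrite /harm_param f_cross; split; case=> h [c1 [c2 [k [h1 h2 hk eR eS]]]]; split=> //;
  exists c1, c2, k; split=> //.
- by apply: lin_inj; rewrite lin_fD !lin_fZ.
- by apply: lin_inj; rewrite lin_fZ lin_fB !lin_fZ.
- by rewrite eR lin_fD !lin_fZ.
- by rewrite eS lin_fZ lin_fB !lin_fZ.
Qed.

End InjectiveLinearMap.

Section Frame.
Variable F : fieldType.
Notation vec := 'rV[F]_3.
Implicit Types (k : F) (u v l A B C D P X Y Z m : vec).
Variables p1 p2 p3 : vec.

Definition frame_det := dot p1 (cross p2 p3).
(* Coordinates with respect to the frame (p1, p2, p3); lines transform by cofactors. *)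
Definition frame u := u 0 i0 *: p1 + u 0 i1 *: p2 + u 0 i2 *: p3.
Definition coframe l :=
  l 0 i0 *: cross p2 p3 + l 0 i1 *: cross p3 p1 + l 0 i2 *: cross p1 p2.

Ltac frame_coords := rewrite /frame_det /frame /coframe; coords p1; coords p2; coords p3.

Lemma frame_e1 : frame e1 = p1.
Proof. by rewrite /frame !(vec3_i0, vec3_i1, vec3_i2) scale1r !scale0r !addr0. Qed.
Lemma frame_e2 : frame e2 = p2.
Proof. by rewrite /frame !(vec3_i0, vec3_i1, vec3_i2) scale1r !scale0r addr0 add0r. Qed.
Lemma frame_e3 : frame e3 = p3.
Proof. by rewrite /frame !(vec3_i0, vec3_i1, vec3_i2) scale1r !scale0r !add0r. Qed.

Lemma cross_frame u v : cross (frame u) (frame v) = coframe (cross u v).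
Proof. by coords u; coords v; frame_coords; veq. Qed.
Lemma cross_coframe u v : cross (coframe u) (coframe v) = frame_det *: frame (cross u v).
Proof. by coords u; coords v; frame_coords; veq. Qed.
Lemma dot_frame_coframe u l : dot (frame u) (coframe l) = frame_det * dot u l.
Proof. by coords u; coords l; frame_coords; vsimp; ring. Qed.
Lemma frame_lin a b u v : frame (a *: u + b *: v) = a *: frame u + b *: frame v.
Proof. by coords u; coords v; frame_coords; veq. Qed.
Lemma coframe_lin a b u v : coframe (a *: u + b *: v) = a *: coframe u + b *: coframe v.
Proof. by coords u; coords v; frame_coords; veq. Qed.

Lemma frameZ k u : frame (k *: u) = k *: frame u.
Proof. by rewrite -[k *: u]addr0 -(scale0r u) frame_lin scale0r addr0. Qed.
Lemma coframeZ k u : coframe (k *: u) = k *: coframe u.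
Proof. by rewrite -[k *: u]addr0 -(scale0r u) coframe_lin scale0r addr0. Qed.

Lemma frame_det_scale_frame v : frame_det *: v =
  frame (vec3 (dot v (cross p2 p3)) (dot v (cross p3 p1)) (dot v (cross p1 p2))).
Proof. by coords v; frame_coords; veq. Qed.
Lemma frame_det_scale_coframe l : frame_det *: l =
  coframe (vec3 (dot p1 l) (dot p2 l) (dot p3 l)).
Proof. by coords l; frame_coords; veq. Qed.

Hypothesis det_neq0 : frame_det != 0.

Lemma frame_surj v : exists u, v = frame u.
Proof.
exists (frame_det^-1 *: vec3 (dot v (cross p2 p3)) (dot v (cross p3 p1)) (dot v (cross p1 p2))).
by rewrite frameZ -frame_det_scale_frame scalerA mulVf // scale1r.
Qed.

Lemma coframe_surj l : exists u, l = coframe u.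
Proof.
exists (frame_det^-1 *: vec3 (dot p1 l) (dot p2 l) (dot p3 l)).
by rewrite coframeZ -frame_det_scale_coframe scalerA mulVf // scale1r.
Qed.

Lemma frame_eq0 u : frame u = 0 -> u = 0.
Proof.
move=> hu; apply/eqP; apply: contraT => /dot_neq0 [m [_ hm]].
have /eqP : frame_det * dot u m = 0 by rewrite -dot_frame_coframe hu dot0v.
by rewrite mulf_eq0 (negbTE det_neq0) (negbTE hm).
Qed.

Lemma coframe_eq0 l : coframe l = 0 -> l = 0.
Proof.
move=> hl; apply/eqP; apply: contraT => /dot_neq0 [m [_ hm]].
have /eqP : frame_det * dot m l = 0 by rewrite -dot_frame_coframe hl dotv0.
by rewrite mulf_eq0 (negbTE det_neq0) dotC (negbTE hm).
Qed.

Lemma frame_neq0 u : (frame u != 0) = (u != 0).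
Proof. exact: (lin_neq0 frame_lin frame_eq0 u). Qed.
Lemma coframe_neq0 l : (coframe l != 0) = (l != 0).
Proof. exact: (lin_neq0 coframe_lin coframe_eq0 l). Qed.

Lemma peq_frame u v : peq (frame u) (frame v) <-> peq u v.
Proof. exact: (peq_lin frame_lin frame_eq0 u v). Qed.

Lemma harm_param_frame P Q R S :
  harm_param (frame P) (frame Q) (frame R) (frame S) <-> harm_param P Q R S.
Proof.
have hc u v : (cross (frame u) (frame v) != 0) = (cross u v != 0).
  by rewrite cross_frame coframe_neq0.
exact: (harm_param_lin frame_lin frame_eq0 hc P Q R S).
Qed.

Lemma harm_param_coframe P Q R S :
  harm_param (coframe P) (coframe Q) (coframe R) (coframe S) <-> harm_param P Q R S.
Proof.
have hc u v : (cross (coframe u) (coframe v) != 0) = (cross u v != 0).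
  by rewrite cross_coframe scaler_eq0 negb_or det_neq0 frame_neq0.
exact: (harm_param_lin coframe_lin coframe_eq0 hc P Q R S).
Qed.

Lemma incident_frame u l : incident (frame u) (coframe l) <-> incident u l.
Proof.
rewrite /incident dot_frame_coframe; split=> [/eqP|->]; last by rewrite mulr0.
by rewrite mulf_eq0 (negbTE det_neq0) => /eqP.
Qed.

Lemma refl_image_frame P m X k : k != 0 ->
  refl_image (frame P) (k *: coframe m) (frame X) = frame (refl_image P m X).
Proof.
move=> hk; rewrite /refl_image !dotZr !dot_frame_coframe (lin_fB frame_lin) frameZ.
congr (_ - _ *: _); have [->|hPm] := eqVneq (dot P m) 0; first by rewrite !mulr0 !invr0 !mulr0.
by field; nonzero.
Qed.

Lemma refl_param_frame P m X Y k : k != 0 ->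
  refl_param (frame P) (k *: coframe m) (frame X) (frame Y) <-> refl_param P m X Y.
Proof.
move=> hk; rewrite /refl_param refl_image_frame // !frame_neq0 scaler_eq0 negb_or hk.
rewrite coframe_neq0 dotZr dot_frame_coframe !mulf_eq0 !negb_or hk det_neq0 /=.
by split; case=> *; split=> //; apply/peq_frame.
Qed.

Lemma on_curve_alg_frame A C B D Z :
  on_curve_alg (frame A) (frame C) (frame B) (frame D) (frame Z) <-> on_curve_alg A C B D Z.
Proof. by rewrite /on_curve_alg !peq_frame !cross_frame harm_param_coframe. Qed.

Lemma in_refl_orbit_frame A B C P Z k : k != 0 ->
  in_refl_orbit (frame A) (frame B) (frame C) (k *: frame P) (frame Z) <->
  in_refl_orbit A B C P Z.
Proof.
move=> hk; rewrite /in_refl_orbit !peq_frame.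
have axisE Y : cross (frame Y) (k *: frame P) = k *: coframe (cross Y P).
  by rewrite crossZr cross_frame.
split; case=> [h|[h|h]]; do ?[by left | by right; left]; right; right.
- case: h => X [Y [R [[hX hi hA hB] [hXY hR hRZ]]]].
  case: (frame_surj X) => x ex; case: (frame_surj Y) => y ey; case: (frame_surj R) => r er.
  subst X Y R; exists x, y, r; split; split.
  + by rewrite -frame_neq0.
  + by move: hi; rewrite cross_frame incident_frame.
  + by move=> /peq_frame.
  + by move=> /peq_frame.
  + exact/harm_param_frame.
  + by move: hR; rewrite axisE refl_param_frame.
  + exact/peq_frame.
- case: h => x [y [r [[hx hi hA hB] [hxy hr hrz]]]].
  exists (frame x), (frame y), (frame r); split; split.
  + by rewrite frame_neq0.
  + by rewrite cross_frame incident_frame.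
  + by move=> /peq_frame.
  + by move=> /peq_frame.
  + exact/harm_param_frame.
  + by rewrite axisE refl_param_frame.
  + exact/peq_frame.
Qed.

End Frame.

Section NormalForm.
Variable F : fieldType.
Hypothesis two_neq0 : (2%:R : F) != 0.
Variables al be ga : F.
Hypotheses (al_neq0 : al != 0) (be_neq0 : be != 0) (ga_neq0 : ga != 0).
Notation vec := 'rV[F]_3.
Implicit Types (k c d : F) (a b w z X Y : vec).

Let D : vec := vec3 al be ga.

(* The harmonic curve of the quadrangle e1, e3, e2, D (see on_curve_alg_conic). *)
Definition conic z :=
  2%:R * ga * z 0 i0 * z 0 i1 - al * z 0 i1 * z 0 i2 - be * z 0 i0 * z 0 i2.

(* The meet of the tangents at e1 and e2 (see cross_tangents). *)
Definition pole : vec := vec3 al be (2%:R * ga).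

(* The image of e3 under the reflection with centre (c : d : 0) and axis through pole
   (see refl_image_conic_point). *)
Definition conic_point c d : vec :=
  let s := c * be + d * al in vec3 (s / (2%:R * ga * d)) (s / (2%:R * ga * c)) 1.

Lemma tangent_e1 a : harm_param (cross e1 e3) (cross e1 D) (cross e1 e2) a ->
  exists s, s != 0 /\ a = s *: vec3 0 (2%:R * ga) (- be).
Proof.
case=> _ [c1 [c2 [k [_ c2_neq0 k_neq0 E ea]]]]; rewrite {}ea.
move: E; rewrite /e1 /e2 /e3 /D; vsimp => /vec3_inj [? E ?].
have -> : c1 = - (c2 * ga) by lincomb1 (1 : F) E.
by exists (k * c2); rewrite mulf_neq0 //; split=> //; veq.
Qed.

Lemma tangent_e2 b : harm_param (cross e2 e3) (cross e2 D) (cross e2 e1) b ->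
  exists s, s != 0 /\ b = s *: vec3 (2%:R * ga) 0 (- al).
Proof.
case=> _ [c1 [c2 [k [_ c2_neq0 k_neq0 E ea]]]]; rewrite {}ea.
move: E; rewrite /e1 /e2 /e3 /D; vsimp => /vec3_inj [E ? ?].
have -> : c1 = - (c2 * ga) by lincomb1 (-1 : F) E.
by exists (- (k * c2)); rewrite oppr_eq0 mulf_neq0 //; split=> //; veq.
Qed.

Lemma cross_tangents sa sb :
  cross (sa *: vec3 0 (2%:R * ga) (- be)) (sb *: vec3 (2%:R * ga) 0 (- al)) =
  (- (2%:R * ga * sa * sb)) *: pole.
Proof. by rewrite /pole; veq. Qed.

Lemma pole_off_axis X Y : harm_param e1 e2 X Y -> dot X (cross Y pole) != 0.
Proof.
move=> [_ [c1 [c2 [k [? ? ? -> ->]]]]].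
have -> : dot (c1 *: e1 + c2 *: e2) (cross (k *: (c1 *: e1 - c2 *: e2)) pole) =
          - (2%:R * 2%:R * ga * k * c1 * c2).
  by rewrite /e1 /e2 /pole; vsimp; ring.
by nonzero.
Qed.

Lemma conicZ k z : conic (k *: z) = k ^+ 2 * conic z.
Proof. by coords z; rewrite /conic; vsimp; ring. Qed.

Lemma conic_peq z w : peq z w -> conic z = 0 -> conic w = 0.
Proof. by case=> _ [k [_ ->]]; rewrite conicZ => ->; rewrite mulr0. Qed.

Lemma conic_e1 : conic e1 = 0. Proof. by rewrite /conic /e1; vsimp; ring. Qed.
Lemma conic_e2 : conic e2 = 0. Proof. by rewrite /conic /e2; vsimp; ring. Qed.
Lemma conic_e3 : conic e3 = 0. Proof. by rewrite /conic /e3; vsimp; ring. Qed.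
Lemma conic_D : conic D = 0. Proof. by rewrite /conic /D; vsimp; ring. Qed.

Lemma harm_param_conic z :
  harm_param (cross z e1) (cross z e2) (cross z e3) (cross z D) -> conic z = 0.
Proof.
coords z => [[_ [c1 [c2 [k [_ _ _ E G]]]]]].
move: E G; rewrite /e1 /e2 /e3 /D /conic; vsimp.
move=> /vec3_inj [E1 E2 ?] /vec3_inj [G1 G2 ?].
lincomb4 x G1 (- y) G2 (k * x) E1 (k * y) E2.
Qed.

Lemma D_neq0 : D != 0.
Proof. by rewrite /D vec3_neq0E al_neq0. Qed.

Lemma conic_coord3_neq0 (x y z : F) :
  cross (vec3 x y z) e1 != 0 -> cross (vec3 x y z) e2 != 0 -> conic (vec3 x y z) = 0 ->
  z != 0.
Proof.
rewrite /conic /e1 /e2; vsimp => n1 n2 hQ; apply/eqP => z0; subst z.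
have /eqP : x * y = 0 by lincomb1 ((2%:R * ga)^-1) hQ.
by rewrite mulf_eq0 => /orP [] /eqP ?; subst; [move/eqP: n2 | move/eqP: n1]; apply; veq.
Qed.

Lemma conic_coord12_eq0 (x y z : F) :
  z != 0 -> conic (vec3 x y z) = 0 -> (x == 0) = (y == 0).
Proof.
rewrite /conic; vsimp => z_neq0 hQ; apply/eqP/eqP => h0; subst.
- by lincomb1 (- (al * z)^-1) hQ.
- by lincomb1 (- (be * z)^-1) hQ.
Qed.

Lemma conic_harm_param w : w != 0 ->
  ~ peq w e1 -> ~ peq w e2 -> ~ peq w e3 -> ~ peq w D -> conic w = 0 ->
  harm_param (cross w e1) (cross w e2) (cross w e3) (cross w D).
Proof.
move=> hw p1 p2 p3 pD; have n1 := npeq_cross_neq0 hw e1_neq0 p1.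
have n2 := npeq_cross_neq0 hw e2_neq0 p2; have n3 := npeq_cross_neq0 hw e3_neq0 p3.
have nD := npeq_cross_neq0 hw D_neq0 pD; move: {p1 p2 p3 pD} n1 n2 n3 nD.
coords w => n1 n2 n3 nD hQ.
have z_neq0 := conic_coord3_neq0 n1 n2 hQ.
have x_neq0 : x != 0.
  apply/eqP => x0; move/eqP: (x0); rewrite (conic_coord12_eq0 z_neq0 hQ) => /eqP y0.
  by subst; move/eqP: n3; apply; rewrite /e3; veq.
have y_neq0 : y != 0 by rewrite -(conic_coord12_eq0 z_neq0 hQ).
move: n1 n2 n3 nD hQ; rewrite /e1 /e2 /e3 /D /conic; vsimp => n1 n2 n3 nD hQ.
have k_neq0 : z * be - y * ga != 0.
  apply/eqP => hk0; move/eqP: nD; apply; apply/vec3_inj; split.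
  - by lincomb1 (-1 : F) hk0.
  - by lincomb2 (- y^-1) hQ (- (x / y)) hk0.
  - by lincomb2 (z^-1) hQ (2%:R * x / z) hk0.
split.
  rewrite cross_vec3 vec3_neq0E; apply/orP; right; apply/orP; right.
  by rewrite (_ : _ - _ = z * z); [rewrite mulf_neq0 | ring].
exists (- (x / z)), (- (y / z)), ((z * be - y * ga) / y); split; try by nonzero.
  by veq_f.
vsimp; apply/vec3_inj; split.
- by field; nonzero.
- by lincomb1 (- y^-1) hQ.
- by lincomb1 (z^-1) hQ.
Qed.

Lemma on_curve_alg_conic z : z != 0 -> on_curve_alg e1 e3 e2 D z <-> conic z = 0.
Proof.
move=> hz; split.
- case=> [h|[h|[h|[h|[_ hf]]]]]; last exact: harm_param_conic.
  + exact: conic_peq (peq_sym h) conic_e1.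
  + exact: conic_peq (peq_sym h) conic_e3.
  + exact: conic_peq (peq_sym h) conic_e2.
  + exact: conic_peq (peq_sym h) conic_D.
- move=> hQ; rewrite /on_curve_alg.
  have [c1|c1] := eqVneq (cross z e1) 0; first by left; apply/peq_crossP; rewrite ?e1_neq0.
  have [c3|c3] := eqVneq (cross z e3) 0.
    by right; left; apply/peq_crossP; rewrite ?e3_neq0.
  have [c2|c2] := eqVneq (cross z e2) 0.
    by right; right; left; apply/peq_crossP; rewrite ?e2_neq0.
  have [cD|cD] := eqVneq (cross z D) 0.
    by right; right; right; left; apply/peq_crossP; rewrite ?D_neq0.
  have n1 := cross_neq0_npeq c1; have n2 := cross_neq0_npeq c2.
  have n3 := cross_neq0_npeq c3; have nD := cross_neq0_npeq cD.
  by do 4!right; split; [do !split | exact: conic_harm_param].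
Qed.

Lemma conic_point_neq0 c d : conic_point c d != 0.
Proof. by rewrite vec3_neq0E oner_neq0 !orbT. Qed.

Lemma conic_point_conic c d : c != 0 -> d != 0 -> conic (conic_point c d) = 0.
Proof. by move=> c_neq0 d_neq0; rewrite /conic /conic_point; vsimp; field; nonzero. Qed.

Lemma refl_image_conic_point k c d : k != 0 -> c != 0 -> d != 0 ->
  refl_image (vec3 c d 0) (cross (k *: vec3 c (- d) 0) pole) e3 = conic_point c d.
Proof.
move=> k_neq0 c_neq0 d_neq0; rewrite /refl_image.
have -> : dot (vec3 c d 0) (cross (k *: vec3 c (- d) 0) pole) =
          - (2%:R * 2%:R * ga * k * c * d) by rewrite /pole; vsimp; ring.
by rewrite /conic_point /pole /e3; veq_f.
Qed.

Lemma in_refl_orbit_witness c d z : c != 0 -> d != 0 ->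
  peq (conic_point c d) z -> in_refl_orbit e1 e2 e3 pole z.
Proof.
move=> c_neq0 d_neq0 hz; right; right.
have hXY : harm_param e1 e2 (vec3 c d 0) (1 *: vec3 c (- d) 0).
  split; first by rewrite cross_e1e2 e3_neq0.
  by exists c, d, 1; split; rewrite ?oner_neq0 //; rewrite /e1 /e2; veq.
have hax := pole_off_axis hXY.
exists (vec3 c d 0), (1 *: vec3 c (- d) 0), (conic_point c d); split; split=> //.
- by rewrite vec3_neq0E c_neq0.
- by rewrite cross_e1e2 /incident /e3; vsimp; ring.
- by apply: npeq_e1; rewrite d_neq0.
- by apply: npeq_e2; rewrite c_neq0.
- split=> //; [by rewrite vec3_neq0E c_neq0 | by apply: contraNneq hax => ->; rewrite dotv0
              | exact: e3_neq0 | ].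
  by rewrite refl_image_conic_point ?oner_neq0 //; apply/peq_refl/conic_point_neq0.
Qed.

Lemma conic_in_refl_orbit w : w != 0 -> conic w = 0 -> in_refl_orbit e1 e2 e3 pole w.
Proof.
move=> hw hQ.
have [c1|n1] := eqVneq (cross w e1) 0; first by left; apply/peq_crossP; rewrite ?e1_neq0.
have [c2|n2] := eqVneq (cross w e2) 0.
  by right; left; apply/peq_crossP; rewrite ?e2_neq0.
move: hw n1 n2 hQ; coords w => hw n1 n2 hQ.
have z_neq0 := conic_coord3_neq0 n1 n2 hQ.
have [x0|x_neq0] := eqVneq x 0.
  move/eqP: (x0); rewrite (conic_coord12_eq0 z_neq0 hQ) => /eqP y0; subst x y.
  apply: (@in_refl_orbit_witness al (- be)); rewrite ?oppr_eq0 //.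
  by split; [exact: conic_point_neq0 | exists z; split=> //; rewrite /conic_point; veq_f].
have y_neq0 : y != 0 by rewrite -(conic_coord12_eq0 z_neq0 hQ).
apply: (in_refl_orbit_witness x_neq0 y_neq0).
split; first exact: conic_point_neq0.
exists z; split=> //; move: hQ; rewrite /conic /conic_point; vsimp => hQ.
apply/vec3_inj; split; last by ring.
- by lincomb1 ((2%:R * ga * y)^-1) hQ.
- by lincomb1 ((2%:R * ga * x)^-1) hQ.
Qed.

Lemma in_refl_orbit_conic z : z != 0 -> in_refl_orbit e1 e2 e3 pole z <-> conic z = 0.
Proof.
move=> hz; split; last exact: conic_in_refl_orbit.
case=> [h|[h|[X [Y [R [_ [[_ [c [d [k [c_neq0 d_neq0 k_neq0 -> ->]]]]] hR hRz]]]]]]].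
- exact: conic_peq (peq_sym h) conic_e1.
- exact: conic_peq (peq_sym h) conic_e2.
case: hR => _ _ _ _; rewrite (_ : c *: e1 + d *: e2 = vec3 c d 0); last by rewrite /e1 /e2; veq.
rewrite (_ : k *: _ = k *: vec3 c (- d) 0); last by rewrite /e1 /e2; veq.
rewrite refl_image_conic_point // => hR.
exact: conic_peq (peq_trans (peq_sym hR) hRz) (conic_point_conic c_neq0 d_neq0).
Qed.

Lemma normal_curve_refl_orbit z : z != 0 ->
  on_curve_alg e1 e3 e2 D z <-> in_refl_orbit e1 e2 e3 pole z.
Proof. by move=> hz; rewrite on_curve_alg_conic // in_refl_orbit_conic. Qed.

End NormalForm.

Lemma quadrangle_frame_det (F : fieldType) (A C B D : 'rV[F]_3) :
  quadrangle A C B D -> frame_det A B C != 0.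
Proof.
case=> _ [nB _]; rewrite /frame_det dot_cross_rot crossC dotNr oppr_eq0.
by apply/eqP; exact: nB.
Qed.

Section QuadrangleFrame.
Variable F : fieldType.
Hypothesis two_neq0 : (2%:R : F) != 0.
Notation vec := 'rV[F]_3.
Variables A B C : vec.
Hypothesis det_neq0 : frame_det A B C != 0.
Local Notation frame := (frame A B C).
Local Notation coframe := (coframe A B C).

Lemma cross_frame_of u v U V :
  frame u = U -> frame v = V -> cross U V = coframe (cross u v).
Proof. by move=> <- <-; rewrite cross_frame. Qed.

Let fA := frame_e1 A B C.
Let fB := frame_e2 A B C.
Let fC := frame_e3 A B C.

Lemma quadrangle_coords_neq0 (x y z : F) : quadrangle A C B (frame (vec3 x y z)) ->
  [/\ x != 0, y != 0 & z != 0].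
Proof.
case=> _ [_ [nDAC [nDAB nDCB]]]; move: nDCB nDAC nDAB.
rewrite /join (cross_frame_of fC fB) (cross_frame_of fA fC) (cross_frame_of fA fB).
rewrite !incident_frame // /incident /e1 /e2 /e3; vsimp => nx ny nz.
by split; apply/eqP => h0; [apply: nx | apply: ny | apply: nz]; rewrite h0; ring.
Qed.

Lemma tangent_A_frame d a :
  tangent_line (join A C) (join A (frame d)) (join A B) (coframe a) ->
  harm_param (cross e1 e3) (cross e1 d) (cross e1 e2) a.
Proof.
rewrite /tangent_line /join harmonic_pencilP // (cross_frame_of fA fC) (cross_frame_of fA fB).
by rewrite (cross_frame_of fA (erefl (frame d))) => /harm_param_coframe; apply.
Qed.

Lemma tangent_B_frame d b :
  tangent_line (join B C) (join B (frame d)) (join B A) (coframe b) ->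
  harm_param (cross e2 e3) (cross e2 d) (cross e2 e1) b.
Proof.
rewrite /tangent_line /join harmonic_pencilP // (cross_frame_of fB fC) (cross_frame_of fB fA).
by rewrite (cross_frame_of fB (erefl (frame d))) => /harm_param_coframe; apply.
Qed.

Variables (al be ga k : F).
Hypotheses (al_neq0 : al != 0) (be_neq0 : be != 0) (ga_neq0 : ga != 0) (k_neq0 : k != 0).
Let D := frame (vec3 al be ga).
Let P := k *: frame (pole al be ga).

Lemma center_off_axis X Y : harmonic A B X Y -> ~ incident X (join Y P).
Proof.
have [x ->] := frame_surj det_neq0 X; have [y ->] := frame_surj det_neq0 Y.
have := harm_param_frame det_neq0 e1 e2 x y; rewrite fA fB => hP.
move=> /(harmonicP two_neq0) /hP hxy.
rewrite /P /join crossZr cross_frame /incident dotZr dot_frame_coframe; apply/eqP.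
by rewrite !mulf_neq0 // (pole_off_axis two_neq0 al be ga_neq0 hxy).
Qed.

Lemma harmonic_curve_refl_orbit Z : Z != 0 ->
  on_harmonic_curve A C B D Z <-> in_refl_orbit A B C P Z.
Proof.
have [z ->] := frame_surj det_neq0 Z; rewrite frame_neq0 // => hz.
rewrite on_harmonic_curveP // /D /P.
have hC := on_curve_alg_frame det_neq0 e1 e3 e2 (vec3 al be ga) z.
have hO := in_refl_orbit_frame det_neq0 e1 e2 e3 (pole al be ga) z k_neq0.
rewrite fA fB fC in hC hO; rewrite hC hO.
rewrite (normal_curve_refl_orbit two_neq0 al_neq0 be_neq0 ga_neq0 hz) frame_neq0 //.
by split; [case | split].
Qed.

End QuadrangleFrame.

Theorem mainTheorem4 (F : fieldType) (hchar : (2%:R : F) != 0)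
    (A C B D a b : 'rV[F]_3) :
  quadrangle A C B D ->
  tangent_line (join A C) (join A D) (join A B) a ->
  tangent_line (join B C) (join B D) (join B A) b ->
  (forall X Y : 'rV[F]_3,
     X != 0 -> incident X (join A B) -> ~ peq X A -> ~ peq X B ->
     harmonic A B X Y ->           (* Y = X . rho_{A,B} *)
     ~ incident X (join Y (meet a b))) /\
  (forall Z : 'rV[F]_3, Z != 0 ->
     (on_harmonic_curve A C B D Z <->
      (peq Z A \/ peq Z B \/
       exists X Y R : 'rV[F]_3,
         [/\ X != 0, incident X (join A B), ~ peq X A & ~ peq X B] /\
         [/\ harmonic A B X Y,            (* Y = X . rho_{A,B} *)
             harm_refl X (join Y (meet a b)) C R  (* R = C . rho_{X,x} *)
           & peq R Z]))).
Proof.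
move=> hq tA tB; have hD := quadrangle_frame_det hq.
have [d eD] := frame_surj hD D; have [a' ea] := coframe_surj hD a.
have [b' eb] := coframe_surj hD b; subst D a b.
move: hq tA tB; case: (vec3_ex d) => [al [be [ga ->]]].
move=> hq /(tangent_A_frame hchar hD) tA /(tangent_B_frame hchar hD) tB.
have [al_neq0 be_neq0 ga_neq0] := quadrangle_coords_neq0 hD hq.
have [sa [sa_neq0 ea]] := tangent_e1 tA; have [sb [sb_neq0 eb]] := tangent_e2 tB.
set k := frame_det A B C * - (2%:R * ga * sa * sb).
have k_neq0 : k != 0 by rewrite /k mulf_neq0 // oppr_eq0 !mulf_neq0.
have eab : meet (coframe A B C a') (coframe A B C b') = k *: frame A B C (pole al be ga).
  by rewrite /meet cross_coframe ea eb cross_tangents frameZ scalerA.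
split.
- move=> X Y _ _ _ _ hXY; rewrite eab.
  exact: (center_off_axis hchar hD ga_neq0 k_neq0 hXY).
- move=> Z hZ; rewrite (in_refl_orbitP hchar) -[cross _ _]/(meet _ _) eab.
  exact: harmonic_curve_refl_orbit.
Qed.
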